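(* Let $G$ be a finite group with commutator subgroup $G'$. Then for each $d\in\mathbb{N}$ one has $|G'|\,E_d\in\mathbb{Z}[G']$.
   Context: $E_d=E_{G,d}:=\sum_{\chi}e_\chi$, the sum over all complex irreducible characters $\chi$ of $G$ of degree $\chi(1)=d$, where $e_\chi=\frac{\chi(1)}{|G|}\sum_{g\in G}\chi(g^{-1})g$. *)

From HB Require Import structures.
From mathcomp Require Import all_boot all_order all_algebra all_fingroup all_solvable all_field all_character.
Set Implicit Arguments. Unset Strict Implicit. Unset Printing Implicit Defensive.
Import Order.TTheory GRing.Theory Num.Theory.
Local Open Scope ring_scope.

(* Elements of the complex group algebra C[G] are represented by their
   coefficient functions gT -> algC (an element sum_g a_g g is identified
   with g |-> a_g).  The central idempotent of chi is
   e_chi = chi(1)/|G| * sum_(g in G) chi(g^-1) g, so its coefficient at g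
   is chi(1)/|G| * chi(g^-1) (which vanishes outside G). *)
Definition e_chi_coef (gT : finGroupType) (G : {group gT}) (i : Iirr G)
    (g : gT) : algC :=
  'chi_i 1%g / #|G|%:R * 'chi_i (g^-1)%g.

Definition E_coef (gT : finGroupType) (G : {group gT}) (d : nat) (g : gT)
    : algC :=
  \sum_(i : Iirr G | 'chi_i 1%g == d%:R) e_chi_coef i g.

From HB Require Import structures.
From mathcomp Require Import all_boot all_order all_algebra all_fingroup all_solvable all_field all_character.
From mathcomp Require Import ring.
Set Implicit Arguments. Unset Strict Implicit.
Import Order.TTheory GRing.Theory Num.Theory.
Local Open Scope ring_scope.

(* Write Phi for the degree-d part of the regular character, so that E_d has
   coefficients Phi(g^-1)/|G|.  Multiplication by a linear character permutes
   the irreducible characters of degree d, so Phi is fixed by it and hence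
   vanishes off G'; Galois conjugation also permutes them, so Phi is
   rational-valued.  Being an idempotent supported on G', E_d is an idempotent
   of C[G'], which forces the coefficient of each irreducible psi of G' in
   (|G'|/|G|) Res Phi to be 0 or psi(1).  Hence the coefficients of |G'| E_d
   are algebraic integers, and being rational they are integers. *)

Definition self_conv (gT : finGroupType) (G : {group gT}) (phi : 'CF(G)) (y : gT)
    : algC :=
  \sum_(x in G) phi (x * y)%g * phi (x^-1)%g.

Section SelfConvolution.
Variables (gT : finGroupType) (G : {group gT}).

Lemma cfdot_sumZ_irr (a : Iirr G -> algC) k : '[\sum_i a i *: 'chi[G]_i, 'chi_k] = a k.
Proof.
rewrite cfdot_suml (bigD1 k) //= cfdotZl cfdot_irr eqxx mulr1 big1 ?addr0 //.
by move=> j /negPf nejk; rewrite cfdotZl cfdot_irr nejk mulr0.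
Qed.

Lemma self_conv_sum_irr (a : Iirr G -> algC) y :
  self_conv (\sum_i a i *: 'chi[G]_i) y
    = #|G|%:R * \sum_i (a i ^+ 2 / 'chi_i 1%g) * 'chi_i y.
Proof.
have orthG i j : \sum_(x in G) 'chi[G]_i (x * y)%g * 'chi_j (x^-1)%g
    = #|G|%:R * ((i == j)%:R * ('chi_i y / 'chi_i 1%g)).
  by rewrite -generalized_orthogonality_relation mulrA mulfV ?neq0CG ?mul1r.
rewrite /self_conv (eq_bigr (fun x => \sum_i \sum_j
    a i * a j * ('chi[G]_i (x * y)%g * 'chi_j (x^-1)%g))) => [|x _]; last first.
  rewrite !sum_cfunE big_distrl; apply: eq_bigr => i _.
  by rewrite big_distrr; apply: eq_bigr => j _; rewrite !cfunE mulrACA.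
rewrite exchange_big mulr_sumr; apply: eq_bigr => i _ /=.
rewrite exchange_big /=; under eq_bigr do rewrite -mulr_sumr orthG.
rewrite (bigD1 i) //= big1 ?addr0 => [|j]; last first.
  by rewrite eq_sym => /negPf->; rewrite mul0r !mulr0.
rewrite eqxx mul1r expr2; ring.
Qed.

(* The group-algebra element with coefficients g |-> phi (g^-1) / n is an
   idempotent exactly when self_conv phi = n * phi on G. *)
Section QuasiIdempotent.
Variables (phi : 'CF(G)) (n : algC).
Hypotheses (nz_n : n != 0) (phi_conv : {in G, forall y, self_conv phi y = n * phi y}).

Lemma self_conv_cfdot_irr i :
  '[phi, 'chi_i] = 0 \/ '[phi, 'chi_i] * #|G|%:R / n = 'chi_i 1%g.
Proof.
pose c j := '[phi, 'chi[G]_j].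
have Dphi : phi = \sum_j c j *: 'chi_j := cfun_sum_cfdot phi.
have Dconv : \sum_j (#|G|%:R * (c j ^+ 2 / 'chi_j 1%g)) *: 'chi_j
    = \sum_j (n * c j) *: 'chi[G]_j.
  apply/cfun_inP => y Gy; rewrite !sum_cfunE.
  transitivity (self_conv phi y).
    rewrite Dphi self_conv_sum_irr mulr_sumr.
    by apply: eq_bigr => j _; rewrite cfunE !mulrA.
  rewrite phi_conv // {1}Dphi sum_cfunE mulr_sumr.
  by apply: eq_bigr => j _; rewrite !cfunE mulrA.
have /(congr1 (cfdot^~ 'chi_i)) := Dconv; rewrite /= !cfdot_sumZ_irr -/(c i).
have [-> _|nz_c Ec] := eqVneq (c i) 0; [by left | right].
have nz_1 := irr1_neq0 i; have nz_G := neq0CG G.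
have -> : c i * #|G|%:R / n
    = #|G|%:R * (c i ^+ 2 / 'chi_i 1%g) * ('chi_i 1%g / (c i * n)).
  by field; rewrite nz_1 nz_c nz_n.
by rewrite Ec; field; rewrite nz_c nz_n.
Qed.

Lemma self_conv_Aint y : phi y * #|G|%:R / n \in Aint.
Proof.
rewrite {1}[phi]cfun_sum_cfdot sum_cfunE !mulr_suml rpred_sum // => i _.
have reorder a b c : a * b * c / n = a * c / n * b by ring.
rewrite cfunE reorder.
by have [->|->] := self_conv_cfdot_irr i; rewrite ?mul0r ?rpred0 ?rpredM ?Aint_irr.
Qed.

End QuasiIdempotent.

Lemma self_conv_Res (H : {group gT}) (phi : 'CF(G)) y :
  H \subset G -> {in [predC H], forall x, phi x = 0} -> y \in H ->
  self_conv ('Res[H] phi) y = self_conv phi y.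
Proof.
move=> sHG phiH Hy; rewrite /self_conv [RHS](bigID [in H]) /= [X in _ + X]big1 ?addr0.
  rewrite [RHS](eq_bigl [in H]) => [|x]; last by rewrite andb_idl => // /(subsetP sHG).
  by apply: eq_bigr => x Hx; rewrite !cfResE ?groupM ?groupV.
by move=> x /andP[_ H'x]; rewrite phiH ?mul0r // inE groupMr.
Qed.

End SelfConvolution.

Section InvariantClassFunctions.
Variables (gT : finGroupType) (G : {group gT}).

Lemma lin_char_invariant_cfun_vanish (phi : 'CF(G)) :
    (forall l, 'chi_l \is a linear_char -> 'chi_l * phi = phi) ->
  {in [predC G^`(1)%g], forall x, phi x = 0}.
Proof.
move=> phi_inv x; rewrite inE -cap_cfker_lin_irr => notKx.
apply/eqP; apply: contraR notKx => nz_phix; apply/bigcapP => l Ll.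
rewrite cfkerEirr inE lin_char1 //; apply/eqP/(mulIf nz_phix).
by rewrite mul1r -{2}(phi_inv l Ll) cfunE.
Qed.

Lemma cfAut_invariant_char_Crat (phi : 'CF(G)) x :
  phi \is a character -> (forall u, cfAut u phi = phi) -> phi x \in Crat.
Proof.
move=> Nphi phi_inv; have [Gx|G'x] := boolP (x \in G); last by rewrite cfun0 ?Crat0.
have [Qn galQn [QnC gQnC [_ _ QnG]]] := group_num_field_exists G.
have [a Da] := QnG _ G _ Nphi x (order_dvdG Gx).
have: a \in fixedField ('Gal({:Qn} / 1))%g.
  apply/fixedFieldP=> [|nu _]; first exact: memvf.
  have [nuC DnuC] := gQnC nu; apply: (fmorph_inj QnC).
  by rewrite DnuC Da -[in RHS](phi_inv nuC) cfunE.
rewrite (galois_fixedField galQn) -Da => /vlineP[k ->].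
by rewrite rmorphZ_num rmorph1 mulr1 Crat_rat.
Qed.

End InvariantClassFunctions.

Definition cfReg_deg (gT : finGroupType) (G : {group gT}) (d : nat) : 'CF(G) :=
  \sum_i (d * ('chi_i 1%g == d%:R))%:R *: 'chi_i.

Section RegularCharacterDegreePart.
Variables (gT : finGroupType) (G : {group gT}) (d : nat).
Local Notation Phi := (cfReg_deg G d).

Lemma cfReg_deg_char : Phi \is a character.
Proof. by rewrite rpred_sum // => i _; rewrite rpredZ_nat ?irr_char. Qed.

Lemma cfAut_cfReg_deg u : cfAut u Phi = Phi.
Proof.
rewrite raddf_sum [RHS](reindex_inj (aut_Iirr_inj u)) /=.
by apply: eq_bigr => i _; rewrite cfAutZ_nat aut_IirrE cfAut_irr1.
Qed.

Lemma lin_char_mul_cfReg_deg l : 'chi_l \is a linear_char -> 'chi_l * Phi = Phi.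
Proof.
move=> Ll; pose s i := cfIirr ('chi[G]_l * 'chi_i).
have sE i : 'chi_(s i) = 'chi_l * 'chi_i by rewrite cfIirrE ?mul_lin_irr ?mem_irr.
have inj_s : injective s.
  move=> i j /(congr1 (fun k => 'chi[G]_k)); rewrite !sE.
  by move/(mulrI (lin_char_unitr Ll))/irr_inj.
rewrite mulr_sumr [RHS](reindex_inj inj_s); apply: eq_bigr => i _.
by rewrite sE -scalerAr cfunE (lin_char1 Ll) mul1r.
Qed.

Lemma cfReg_deg_vanish : {in [predC G^`(1)%g], forall x, Phi x = 0}.
Proof. exact/lin_char_invariant_cfun_vanish/lin_char_mul_cfReg_deg. Qed.

Lemma self_conv_cfReg_deg y : self_conv Phi y = #|G|%:R * Phi y.
Proof.
rewrite self_conv_sum_irr sum_cfunE; congr (_ * _); apply: eq_bigr => i _.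
rewrite cfunE; case: eqP => [Di|_]; last by rewrite !muln0 mul0r expr2 !mul0r.
by rewrite muln1 -Di expr2 mulfK ?irr1_neq0.
Qed.

Lemma E_coef_cfReg_deg g : E_coef G d g = Phi (g^-1)%g / #|G|%:R.
Proof.
rewrite /E_coef sum_cfunE mulr_suml big_mkcond /=; apply: eq_bigr => i _.
rewrite cfunE /e_chi_coef; case: eqP => [->|_]; last by rewrite muln0 !mul0r.
by rewrite muln1 mulrAC.
Qed.

End RegularCharacterDegreePart.

Theorem lemma3p7 (gT : finGroupType) (G : {group gT}) (d : nat) :
  (forall g : gT, (#|(G^`(1))%g|%:R * E_coef G d g) \in Num.int) /\
  (forall g : gT, g \notin (G^`(1))%g -> E_coef G d g = 0).
Proof.
have vanish g : g \notin G^`(1)%g -> E_coef G d g = 0.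
  by move=> G'g; rewrite E_coef_cfReg_deg cfReg_deg_vanish ?mul0r // inE groupV.
split=> [g|//]; have [G'g|/vanish->] := boolP (g \in G^`(1)%g); last first.
  by rewrite mulr0 rpred0.
pose H := (G^`(1))%G; have sHG : H \subset G := der_sub 1 G.
pose phi := 'Res[H] (cfReg_deg G d).
have phi_conv : {in H, forall y, self_conv phi y = #|G|%:R * phi y}.
  move=> y Hy; rewrite self_conv_Res ?self_conv_cfReg_deg ?cfResE ?(subsetP sHG) //.
  exact: cfReg_deg_vanish.
rewrite E_coef_cfReg_deg; apply: Cint_rat_Aint.
  rewrite rpredM ?rpred_div ?rpred_nat ?cfAut_invariant_char_Crat //.
    exact: cfReg_deg_char.
  exact: cfAut_cfReg_deg.
have := self_conv_Aint (neq0CG G) phi_conv (g^-1)%g.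
by rewrite cfResE ?groupV // mulrCA mulrA.
Qed.
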